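(* Consider four bosonic modes labelled $1,2,3,4$, and a beam-splitter network $\hat B_{\text{network}}=\hat B_{j_4k_4}\hat B_{j_3k_3}\hat B_{j_2k_2}\hat B_{j_1k_1}$ consisting of four balanced beam splitters, where $j_i\neq k_i\in\{1,2,3,4\}$ for each $i$ and the beam splitter $\hat B_{j_1k_1}$ acts first on the state, then $\hat B_{j_2k_2}$, and so on. Then $\hat B_{\text{network}}$ is a real balanced four-splitter if and only if all of the following hold: (1) each mode is acted on by exactly two of the four beam splitters; (2) all modes interact with a first beam splitter before any mode interacts with a second one (i.e., in the order of application, no beam splitter acts on a mode that has already been acted on while some mode has not yet been acted on by any beam splitter); (3) no two of the beam splitters act on the same (unordered) pair of modes.
   Context: For modes with annihilation operators $\hat a_j$ and quadratures $\hat q_j=(\hat a_j+\hat a_j^\dagger)/\sqrt2$, $\hat p_j=-i(\hat a_j-\hat a_j^\dagger)/\sqrt2$, the balanced beam splitter from mode $j$ to mode $k$ is $\hat B_{jk}=e^{\frac{\pi}{4}(\hat a_j\hat a_k^\dagger-\hat a_j^\dagger\hat a_k)}$ (note $\hat B_{kj}=\hat B_{jk}^\dagger$, so each beam splitter may point in either direction). A passive linear-optical unitary $\hat U$ on $N$ modes has matrix $\mathbf U\in\mathrm U(N)$ defined by $\hat U^\dagger\hat{\mathbf a}\hat U=\mathbf U\hat{\mathbf a}$; for $\hat B_{jk}$ this matrix equals the identity except on rows/columns $(j,k)$, where it is $\tfrac1{\sqrt2}\begin{bmatrix}1&-1\\1&1\end{bmatrix}$, and the matrix of the network is the product $\mathbf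 R_{j_4k_4}\mathbf R_{j_3k_3}\mathbf R_{j_2k_2}\mathbf R_{j_1k_1}$. A real balanced four-splitter is a linear-optical unitary on four modes whose matrix is real orthogonal with all entries of equal magnitude (hence $\pm\tfrac12$). *)

From HB Require Import structures.
From mathcomp Require Import all_boot all_order all_algebra.
From mathcomp Require Import reals.
Set Implicit Arguments. Unset Strict Implicit. Unset Printing Implicit Defensive.
Import Order.TTheory GRing.Theory Num.Theory.
Local Open Scope ring_scope.

(* Modes 1,2,3,4 are represented by 'I_4 = {0,1,2,3}. *)

(* Matrix of the balanced beam splitter B_{jk}: identity except on rows/columns
   (j,k), where it is 1/sqrt2 * [[1,-1],[1,1]]. *)
Definition bs_mx {R : realType} (j k : 'I_4) : 'M[R]_4 :=
  let c := (Num.sqrt (2 : R))^-1 in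
  \matrix_(a < 4, b < 4)
    if a == j then (if b == j then c else if b == k then - c else 0)
    else if a == k then (if b == j then c else if b == k then c else 0)
    else (a == b)%:R.

(* Matrix of the network B_{j4k4} B_{j3k3} B_{j2k2} B_{j1k1}; the beam splitter
   with index i : 'I_4 is the (i+1)-th one applied. *)
Definition network_mx {R : realType} (j k : 'I_4 -> 'I_4) : 'M[R]_4 :=
  bs_mx (j 3%:R) (k 3%:R) *m bs_mx (j 2%:R) (k 2%:R) *m
  bs_mx (j 1%:R) (k 1%:R) *m bs_mx (j 0%:R) (k 0%:R).

Definition real_balanced_four_splitter {R : realType} (M : 'M[R]_4) : Prop :=
  M *m M^T = 1%:M /\ (forall a b a' b' : 'I_4, `|M a b| = `|M a' b'|).

Definition acts_on (j k : 'I_4 -> 'I_4) (i m : 'I_4) : bool :=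
  (j i == m) || (k i == m).

Definition cond_two_each (j k : 'I_4 -> 'I_4) : Prop :=
  forall m : 'I_4, #|[set i : 'I_4 | acts_on j k i m]| = 2%N.

Definition cond_first_round (j k : 'I_4 -> 'I_4) : Prop :=
  forall i m : 'I_4, acts_on j k i m ->
    (exists i' : 'I_4, (i' < i)%N /\ acts_on j k i' m) ->
    forall m' : 'I_4, exists i'' : 'I_4, (i'' < i)%N /\ acts_on j k i'' m'.

Definition cond_distinct_pairs (j k : 'I_4 -> 'I_4) : Prop :=
  forall i i' : 'I_4, i != i' -> [set j i; k i] != [set j i'; k i'].

(* Each balanced beam splitter is 1/sqrt 2 times a matrix with entries in
   Z[sqrt 2], so the network matrix is 1/4 times a matrix P over Z[sqrt 2],
   which can be computed exactly with pairs of integers.  The network is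
   orthogonal, being a product of orthogonal matrices, and an orthogonal 4x4
   matrix has entries of equal magnitude iff all of them are 1/2 in absolute
   value; as sqrt 2 is irrational, this means that every entry of P is 2 or -2.
   Finally there are only 12^4 networks, and for each of them a computation
   confirms that all entries of P are 2 or -2 exactly when the three
   combinatorial conditions hold. *)

From HB Require Import structures.
From mathcomp Require Import all_boot all_order all_algebra.
From mathcomp Require Import reals.
From mathcomp Require Import ring lra zify.
From Stdlib Require Import FunctionalExtensionality.

Set Implicit Arguments.
Unset Strict Implicit.
Unset Printing Implicit Defensive.

Import Order.TTheory GRing.Theory Num.Theory.
Local Open Scope ring_scope.

(* [enum 'I_4] and the literals of 'I_4 do not reduce well under vm_compute. *)
Definition ords4 : seq 'I_4 :=
  [:: @Ordinal 4 0 isT; @Ordinal 4 1 isT; @Ordinal 4 2 isT; @Ordinal 4 3 isT].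

Lemma nth_ords4 (i : 'I_4) : nth ord0 ords4 i = i.
Proof. by apply/val_inj; case: i => [[|[|[|[|]]]]]. Qed.

Lemma mem_ords4 (i : 'I_4) : i \in ords4.
Proof. by rewrite -[i]nth_ords4 mem_nth. Qed.

Lemma all_ords4P (P : pred 'I_4) : reflect (forall i, P i) (all P ords4).
Proof. by apply: (iffP allP) => P_all i *; apply: P_all; rewrite mem_ords4. Qed.

Lemma has_ords4P (P : pred 'I_4) : reflect (exists i, P i) (has P ords4).
Proof. by apply: (iffP hasP) => [[i _ Pi] | [i Pi]]; exists i; rewrite ?mem_ords4. Qed.

Lemma card_ords4 (P : pred 'I_4) : #|[set i | P i]| = count P ords4.
Proof.
rewrite -size_filter -(card_uniqP _) ?filter_uniq //.
by apply: eq_card => i; rewrite !inE mem_filter mem_ords4 andbT.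
Qed.

Lemma big_ords4 (V : nmodType) (F : 'I_4 -> V) :
  \sum_(i < 4) F i = \sum_(i <- ords4) F i.
Proof.
apply/perm_big/uniq_perm; rewrite ?index_enum_uniq // => i.
by rewrite mem_index_enum mem_ords4.
Qed.

(* Tabulating a function of two indices makes vm_compute evaluate each value
   once, instead of once per use. *)
Definition memo4 (T : Type) (x0 : T) (f : 'I_4 -> 'I_4 -> T) : 'I_4 -> 'I_4 -> T :=
  let table := [seq [seq f a b | b <- ords4] | a <- ords4] in
  fun a b => nth x0 (nth [::] table a) b.

Lemma memo4_id T (x0 : T) f : memo4 x0 f = f.
Proof.
do 2 apply: functional_extensionality => ?.
by rewrite /memo4 (nth_map ord0) ?(nth_map ord0) ?nth_ords4 // size_map.
Qed.

Definition fun4 (x0 x1 x2 x3 : 'I_4) : 'I_4 -> 'I_4 :=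
  fun i => nth x0 [:: x0; x1; x2; x3] i.

Definition all_fun4 (P : ('I_4 -> 'I_4) -> bool) : bool :=
  all (fun x0 => all (fun x1 => all (fun x2 => all (fun x3 =>
    P (fun4 x0 x1 x2 x3)) ords4) ords4) ords4) ords4.

Lemma all_fun4P P : all_fun4 P -> forall j, P j.
Proof.
move=> P_all j; have -> : j = fun4 (j 0) (j 1) (j 2) (j 3).
  apply: functional_extensionality => -[[|[|[|[|i]]]] lt_i4] //;
  by rewrite /fun4 /=; congr j; apply: val_inj.
move/all_ords4P/(_ (j 0))/all_ords4P/(_ (j 1)): P_all.
by move/all_ords4P/(_ (j 2))/all_ords4P/(_ (j 3)).
Qed.

(* [(a, b) : zsqrt2] stands for a + b sqrt 2. *)
Definition zsqrt2 := (int * int)%type.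

Definition zs_add (x y : zsqrt2) : zsqrt2 := (x.1 + y.1, x.2 + y.2).

Definition zs_mul (x y : zsqrt2) : zsqrt2 :=
  (x.1 * y.1 + 2 * (x.2 * y.2), x.1 * y.2 + x.2 * y.1).

Definition balanced_entry (x : zsqrt2) : bool := (x == (2, 0)) || (x == (-2, 0)).

Lemma zs_sqr_eq4 (x : zsqrt2) : zs_mul x x = (4, 0) -> balanced_entry x.
Proof.
case: x => a b [sqr_a_b ab_eq0]; rewrite /balanced_entry !xpair_eqE.
have [b_le1 | b_ge2] : `|b| <= 1 \/ 2 <= `|b| by lia.
all: nia.
Qed.

Lemma sqr_eq_double_sqr (m n : nat) : (m ^ 2 = 2 * n ^ 2)%N -> n = 0%N.
Proof.
move=> E; apply/eqP; rewrite eqn0Ngt; apply/negP => n_gt0.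
have m_gt0 : (0 < m)%N by case: m E => [|m] //; rewrite exp0n //; nia.
have := congr1 (logn 2) E.
by rewrite lognM ?expn_gt0 ?n_gt0 // !lognX (@logn_prime 2 2) //=; lia.
Qed.

Definition zmx := 'I_4 -> 'I_4 -> zsqrt2.

Definition zmx_mul (A B : zmx) : zmx := memo4 (0, 0) (fun a b =>
  foldr zs_add (0, 0) [seq zs_mul (A a c) (B c b) | c <- ords4]).

Definition zmx_tr (A : zmx) : zmx := fun a b => A b a.

(* sqrt 2 times [bs_mx j k]; indices are compared as natural numbers, which
   vm_compute does much faster than comparing ordinals. *)
Definition zbs (j k : 'I_4) : zmx := memo4 (0, 0) (fun a b =>
  if a == j :> nat then
    if b == j :> nat then (1, 0) else if b == k :> nat then (-1, 0) else (0, 0)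
  else if a == k :> nat then
    if b == j :> nat then (1, 0) else if b == k :> nat then (1, 0) else (0, 0)
  else if a == b :> nat then (0, 1) else (0, 0)).

Definition znetwork (j k : 'I_4 -> 'I_4) : zmx :=
  zmx_mul (zmx_mul (zmx_mul (zbs (j 3) (k 3)) (zbs (j 2) (k 2))) (zbs (j 1) (k 1)))
    (zbs (j 0) (k 0)).

Lemma zbs_orthogonal_check :
  all (fun j => all (fun k => (j != k) ==> all (fun a => all (fun b =>
    zmx_mul (zbs j k) (zmx_tr (zbs j k)) a b == if a == b then (2, 0) else (0, 0))
  ords4) ords4) ords4) ords4.
Proof. by vm_compute. Qed.

Lemma mulmx_orthogonal (T : comPzRingType) n (A B : 'M[T]_n) :
  A *m A^T = 1%:M -> B *m B^T = 1%:M -> (A *m B) *m (A *m B)^T = 1%:M.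
Proof. by move=> AAT BBT; rewrite trmx_mul mulmxA -(mulmxA A) BBT mulmx1. Qed.

Lemma orthogonal_sqr_entries (R : realDomainType) n (M : 'M[R]_n) :
  M *m M^T = 1%:M -> (forall a b a' b', `|M a b| = `|M a' b'|) ->
  forall a b, M a b ^+ 2 *+ n = 1.
Proof.
move=> MMT eq_norms a b.
have /matrixP/(_ a a) := MMT; rewrite !mxE eqxx mulr1n => <-.
rewrite (eq_bigr (fun=> M a b ^+ 2)) ?sumr_const ?card_ord // => c _.
rewrite mxE -expr2 -real_normK ?num_real // (eq_norms a c a b).
by rewrite real_normK ?num_real.
Qed.

Section RealInterpretation.

Variable R : realType.

Local Notation sqrt2 := (Num.sqrt (2 : R)).

Lemma sqrt2_sqr : sqrt2 ^+ 2 = 2.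
Proof. by rewrite sqr_sqrtr // ler0n. Qed.

Lemma sqrt2_neq0 : sqrt2 != 0.
Proof. by rewrite sqrtr_eq0 -ltNge ltr0n. Qed.

Definition zs_real (x : zsqrt2) : R := x.1%:~R + x.2%:~R * sqrt2.

Lemma zs_real_add x y : zs_real (zs_add x y) = zs_real x + zs_real y.
Proof. by rewrite /zs_real /= !intrD addrACA mulrDl. Qed.

Lemma zs_real_mul x y : zs_real (zs_mul x y) = zs_real x * zs_real y.
Proof. by rewrite /zs_real /= !intrD !intrM -[2%:~R]sqrt2_sqr; ring. Qed.

Lemma zs_real_sum (s : seq zsqrt2) :
  zs_real (foldr zs_add (0, 0) s) = \sum_(x <- s) zs_real x.
Proof.
elim: s => [|x s IHs]; first by rewrite big_nil /zs_real /= mul0r addr0.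
by rewrite big_cons zs_real_add IHs.
Qed.

Lemma zs_real_inj : injective zs_real.
Proof.
move=> [a b] [c d]; rewrite /zs_real /=.
have [-> E | d_neq_b E] := eqVneq d b.
  by have /intr_inj -> : a%:~R = c%:~R :> R by lra.
have {}E : (a - c)%:~R = (d - b)%:~R * sqrt2 :> R by rewrite !intrB mulrBl; lra.
have sqrE : (a - c) ^+ 2 = 2 * (d - b) ^+ 2.
  apply: (@intr_inj R); rewrite !expr2 !intrM E.
  have -> : (2%:~R : R) = sqrt2 ^+ 2 by rewrite sqrt2_sqr.
  ring.
have := congr1 absz sqrE; rewrite abszM !abszX => /sqr_eq_double_sqr/eqP.
by rewrite absz_eq0 subr_eq0 (negPf d_neq_b).
Qed.

Lemma balanced_entry_norm x : balanced_entry x -> `|zs_real x| = 2.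
Proof.
by case/orP => /eqP ->; rewrite /zs_real /= mul0r addr0 ?normrN ger0_norm ?ler0n.
Qed.

Definition zmx_real (A : zmx) : 'M[R]_4 := \matrix_(a, b) zs_real (A a b).

Lemma zmx_real_mul A B : zmx_real (zmx_mul A B) = zmx_real A *m zmx_real B.
Proof.
apply/matrixP => a b; rewrite !mxE /zmx_mul memo4_id zs_real_sum big_map big_ords4.
by apply: eq_bigr => c _; rewrite zs_real_mul !mxE.
Qed.

Lemma zmx_real_tr A : zmx_real (zmx_tr A) = (zmx_real A)^T.
Proof. by apply/matrixP => a b; rewrite !mxE. Qed.

Lemma bs_mx_zbs j k : bs_mx j k = sqrt2^-1 *: zmx_real (zbs j k).
Proof.
apply/matrixP => a b; rewrite !mxE /zbs memo4_id !val_eqE.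
by repeat case: ifP => _; rewrite /zs_real /= ?mul0r ?mul1r ?addr0 ?add0r
  ?mulr1 ?mulr0 ?mulrN1 ?mulVf ?sqrt2_neq0.
Qed.

Lemma network_mx_znetwork j k :
  network_mx j k = 4^-1 *: zmx_real (znetwork j k).
Proof.
rewrite /network_mx /znetwork !zmx_real_mul !bs_mx_zbs.
rewrite -!(scalemxAl, scalemxAr) !scalerA; congr (_ *: _).
by rewrite -!invfM -expr2 sqrt2_sqr -mulrA -expr2 sqrt2_sqr -natrM.
Qed.

Lemma bs_mx_orthogonal j k : j != k -> @bs_mx R j k *m (bs_mx j k)^T = 1%:M.
Proof.
move=> j_neq_k; rewrite bs_mx_zbs linearZ /= -scalemxAl -scalemxAr scalerA.
rewrite -zmx_real_tr -zmx_real_mul; apply/matrixP => a b; rewrite !mxE.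
move/all_ords4P/(_ j)/all_ords4P/(_ k)/implyP/(_ j_neq_k): zbs_orthogonal_check.
move/all_ords4P/(_ a)/all_ords4P/(_ b)/eqP ->.
case: (a == b); rewrite /zs_real /= ?mul0r ?addr0 ?mulr0 //.
by rewrite -invfM -expr2 sqrt2_sqr mulVf ?pnatr_eq0.
Qed.

Lemma network_mx_orthogonal j k : (forall i, j i != k i) ->
  @network_mx R j k *m (network_mx j k)^T = 1%:M.
Proof.
move=> hjk; rewrite /network_mx.
by do 3 (apply: mulmx_orthogonal; last exact: bs_mx_orthogonal); exact: bs_mx_orthogonal.
Qed.

Lemma real_balanced_network j k : (forall i, j i != k i) ->
  real_balanced_four_splitter (@network_mx R j k) <->
  forall a b, balanced_entry (znetwork j k a b).
Proof.
move=> hjk; have entryE a b : network_mx j k a b = 4^-1 * zs_real (znetwork j k a b).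
  by rewrite network_mx_znetwork !mxE.
split=> [[NNT eq_norms] a b | balanced].
  have := orthogonal_sqr_entries NNT eq_norms a b; rewrite entryE -mulr_natr.
  set x := znetwork j k a b => sqrE.
  apply/zs_sqr_eq4/zs_real_inj; rewrite zs_real_mul [zs_real (4, 0)]/zs_real /=.
  nra.
split=> [|a b a' b']; first exact: network_mx_orthogonal.
by rewrite !entryE !normrM !balanced_entry_norm.
Qed.

End RealInterpretation.

Section Conditions.

Variable act : 'I_4 -> 'I_4 -> bool.

Definition two_eachb : bool := all (fun m => count (act ^~ m) ords4 == 2%N) ords4.

Definition acted_before (i m : 'I_4) : bool :=
  has (fun i' : 'I_4 => (i' < i)%N && act i' m) ords4.

Definition first_roundb : bool :=
  all (fun i => all (fun m =>
    act i m ==> acted_before i m ==> all (acted_before i) ords4) ords4) ords4.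

Definition distinct_pairsb : bool :=
  all (fun i => all (fun i' =>
    (i != i') ==> ~~ all (fun m => act i m == act i' m) ords4) ords4) ords4.

Definition network_conditions : bool :=
  [&& two_eachb, first_roundb & distinct_pairsb].

End Conditions.

Section NetworkConditions.

Variables j k : 'I_4 -> 'I_4.

Lemma two_eachP : reflect (cond_two_each j k) (two_eachb (acts_on j k)).
Proof.
apply: (iffP (all_ords4P _)) => two m; first by apply/eqP; rewrite card_ords4.
by rewrite -card_ords4 two.
Qed.

Lemma acted_beforeP (i m : 'I_4) :
  reflect (exists i' : 'I_4, (i' < i)%N /\ acts_on j k i' m)
    (acted_before (acts_on j k) i m).
Proof.
apply: (iffP (has_ords4P _)) => [[i' /andP[]] | [i' []]] lt_i'i acts.
  by exists i'.
by exists i'; rewrite lt_i'i.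
Qed.

Lemma first_roundP : reflect (cond_first_round j k) (first_roundb (acts_on j k)).
Proof.
apply: (iffP (all_ords4P _)) => [first i m acts /acted_beforeP before m' | first i].
  apply/acted_beforeP; move/all_ords4P/(_ m): (first i).
  by rewrite acts before => /all_ords4P.
apply/all_ords4P => m; apply/implyP => acts; apply/implyP => /acted_beforeP before.
by apply/all_ords4P => m'; apply/acted_beforeP; exact: first before m'.
Qed.

Lemma set2_eq_acts_on (i i' : 'I_4) :
  ([set j i; k i] == [set j i'; k i']) =
  all (fun m => acts_on j k i m == acts_on j k i' m) ords4.
Proof.
have memE i'' m : (m \in [set j i''; k i'']) = acts_on j k i'' m.
  by rewrite !inE /acts_on !(eq_sym m).
apply/eqP/all_ords4P => [same m | same]; first by rewrite -!memE same.
by apply/setP => m; rewrite !memE; exact/eqP.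
Qed.

Lemma distinct_pairsP :
  reflect (cond_distinct_pairs j k) (distinct_pairsb (acts_on j k)).
Proof.
apply: (iffP (all_ords4P _)) => distinct i => [i' neq | ].
  by rewrite set2_eq_acts_on; move/all_ords4P/(_ i')/implyP: (distinct i); apply.
apply/all_ords4P => i'; apply/implyP => neq.
by rewrite -set2_eq_acts_on; exact: distinct.
Qed.

Lemma network_conditionsP :
  reflect [/\ cond_two_each j k, cond_first_round j k & cond_distinct_pairs j k]
    (network_conditions (acts_on j k)).
Proof.
by apply: (iffP and3P) => -[/two_eachP ? /first_roundP ? /distinct_pairsP ?].
Qed.

End NetworkConditions.

Definition balanced_zmx (A : zmx) : bool :=
  all (fun a => all (fun b => balanced_entry (A a b)) ords4) ords4.

Lemma balanced_zmxP A :
  reflect (forall a b, balanced_entry (A a b)) (balanced_zmx A).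
Proof. by apply: (iffP (all_ords4P _)) => bal a; apply/all_ords4P; apply: bal. Qed.

(* An [if] rather than [==>], whose arguments vm_compute would both evaluate. *)
Lemma znetwork_classification_check :
  all_fun4 (fun j => all_fun4 (fun k =>
    if all (fun i => j i != k i) ords4 then
      balanced_zmx (znetwork j k) == network_conditions (memo4 false (acts_on j k))
    else true)).
Proof. by vm_compute. Qed.

Lemma znetwork_classification j k : (forall i, j i != k i) ->
  balanced_zmx (znetwork j k) = network_conditions (acts_on j k).
Proof.
move=> hjk; have hjk4 : all (fun i => j i != k i) ords4 by apply/all_ords4P.
rewrite -[acts_on j k](memo4_id false); apply/eqP.
by move/all_fun4P/(_ j)/all_fun4P/(_ k): znetwork_classification_check; rewrite hjk4.
Qed.

Theorem theorem2 (R : realType) (j k : 'I_4 -> 'I_4)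
  (hjk : forall i : 'I_4, j i != k i) :
  real_balanced_four_splitter (@network_mx R j k) <->
  [/\ cond_two_each j k, cond_first_round j k & cond_distinct_pairs j k].
Proof.
have classified := znetwork_classification hjk.
rewrite real_balanced_network //; split.
  by move/balanced_zmxP; rewrite classified => /network_conditionsP.
by move/network_conditionsP; rewrite -classified => /balanced_zmxP.
Qed.
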